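(* Let $(\Lambda,d)$ be a topological $1$-graph. For all $f\in C_c(\Lambda^0)$ and $\xi,\eta\in C_c(\Lambda^1)$ we have, in $C^*(G_\Lambda)$, (i) $\Psi_1(\xi)^*\Psi_1(\eta)=\Psi_0(\langle\xi,\eta\rangle)$ and (ii) $\Psi_0(f)\Psi_1(\xi)=\Psi_1(\phi(f)\xi)$.
   Context: A topological $1$-graph is a pair $(\Lambda,d)$ with $\Lambda$ a small category whose object set $\Lambda^0$ and morphism set $\Lambda$ are second-countable locally compact Hausdorff spaces, $r,s$ continuous with $s$ a local homeomorphism, composition continuous and open, $d:\Lambda\to\mathbb{N}$ a continuous functor, with unique factorization: for $d(\lambda)=m+n$ there is a unique composable $(\xi,\eta)$ with $\lambda=\xi\eta$, $d(\xi)=m$, $d(\eta)=n$. Objects are identified with degree-$0$ paths, $\Lambda^1=d^{-1}(1)$, $\lambda(p,q)$ denotes the degree-$(q-p)$ segment. The path space $X_\Lambda$ consists of degree-preserving continuous functors $x:\Omega_{1,m}\to\Lambda$ ($m\in\mathbb{N}\cup\{\infty\}$, where $\Omega_{1,m}$ is the discrete category with objects $\{p\le m\}$, morphisms $(p,q)$, $p\le q\le m$, of degree $q-p$), with $r(x)=x(0)$, $d(x)=m$, concatenation $\lambda x$ and shift $(\sigma^mx)(0,p)=x(m,m+p)$. The path groupoid $G_\Lambda$ has morphisms $(\lambda x,d(\lambda)-d(\mu),\mu x)$ with $s(\lambda)=s(\mu)=r(x)$, range/source the first/third coordinates, product $(x,m,y)(y,n,z)=(x,m+n,z)$, inverse $(y,-m,x)$,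 unit space identified with $X_\Lambda$; with its standard topology (basis $Z(U*_sV,m)\cap Z(F,m)^c$ for $U,V\subset\Lambda$ open, $F\subset\Lambda*_s\Lambda$ compact, where $Z(F,m)=\{(\lambda x,m,\mu x):(\lambda,\mu)\in F,d(\lambda)-d(\mu)=m\}$) it is a locally compact Hausdorff $r$-discrete groupoid with counting-measure Haar system, so $C_c(G_\Lambda)\subset C^*(G_\Lambda)$ with convolution product, and $C_0(G_\Lambda^{(0)})\subset C^*(G_\Lambda)$. For $\xi,\eta\in C_c(\Lambda^1)$, $\langle\xi,\eta\rangle(v)=\sum_{e\in\Lambda^1,s(e)=v}\overline{\xi(e)}\eta(e)$, and for $f\in C_0(\Lambda^0)$, $(\phi(f)\xi)(e)=f(r(e))\xi(e)$. Define $\Psi_0(f)\in C_0(G_\Lambda^{(0)})\subset C^*(G_\Lambda)$ by $\Psi_0(f)(x,0,x)=f(r(x))$, and for $\xi\in C_c(\Lambda^1)$ define $\Psi_1(\xi)\in C_c(G_\Lambda)$ by $\Psi_1(\xi)(x,m,y)=\delta_{m,1}\delta_{\sigma^1x,y}\,\xi(x(0,1))$. *)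

From HB Require Import structures.
From mathcomp Require Import all_boot all_order all_algebra.
From mathcomp Require Import all_classical all_reals.
From mathcomp Require Import topology normedtype.
From mathcomp Require Import complex.
Set Implicit Arguments. Unset Strict Implicit. Unset Printing Implicit Defensive.
Import Order.TTheory GRing.Theory Num.Theory.
Import numFieldTopology.Exports numFieldNormedType.Exports.
Local Open Scope classical_set_scope.
Local Open Scope ring_scope.

Definition local_homeo (X Y : topologicalType) (f : X -> Y) : Prop :=
  forall x, exists U : set X,
    [/\ open U, U x, open (f @` U),
        (forall a b, U a -> U b -> f a = f b -> a = b) &
        {within U, continuous f} /\
        (forall V : set X, open V -> V `<=` U -> open (f @` V))].

Definition sclch (T : topologicalType) : Prop :=
  [/\ @second_countable T, locally_compact [set: T] & hausdorff_space T].

(* Morphisms are [Mor], objects are [Obj];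
   objects are identified with degree-0 morphisms via [idm]; composition
   [cmp a b] (= "a b", first b then a, s a = r b) is meaningful only on
   composable pairs. *)
Record top1graph := Top1Graph {
  Obj : topologicalType;
  Mor : topologicalType;
  rg : Mor -> Obj;
  sc : Mor -> Obj;
  idm : Obj -> Mor;
  cmp : Mor -> Mor -> Mor;
  deg : Mor -> nat;
  sc_idm : forall v, sc (idm v) = v;
  rg_idm : forall v, rg (idm v) = v;
  sc_cmp : forall a b, sc a = rg b -> sc (cmp a b) = sc b;
  rg_cmp : forall a b, sc a = rg b -> rg (cmp a b) = rg a;
  cmp_idl : forall a, cmp (idm (rg a)) a = a;
  cmp_idr : forall a, cmp a (idm (sc a)) = a;
  cmpA : forall a b c, sc a = rg b -> sc b = rg c ->
           cmp a (cmp b c) = cmp (cmp a b) c;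
  Obj_sclch : sclch Obj;
  Mor_sclch : sclch Mor;
  rg_cont : continuous rg;
  sc_lh : local_homeo sc;
  idm_cont : continuous idm;
  cmp_cont : {within [set p : Mor * Mor | sc p.1 = rg p.2],
                continuous (fun p : Mor * Mor => cmp p.1 p.2)};
  cmp_open : forall W : set (Mor * Mor), open W ->
      open ((fun p : Mor * Mor => cmp p.1 p.2) @`
              (W `&` [set p | sc p.1 = rg p.2]));
  (* d : Lambda -> N continuous (N discrete) *)
  deg_cont : forall n : nat, open (deg @^-1` [set n]);
  deg_idm : forall v, deg (idm v) = 0%N;
  deg_cmp : forall a b, sc a = rg b -> deg (cmp a b) = (deg a + deg b)%N;
  unique_fact : forall (l : Mor) (m n : nat), deg l = (m + n)%N ->
      exists! p : Mor * Mor,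
        [/\ sc p.1 = rg p.2, l = cmp p.1 p.2, deg p.1 = m & deg p.2 = n]
}.

(* A path x : Omega_{1,m} -> Lambda is encoded by
   its degree m (None = infinity) and its morphism map
   (p,q) |-> x(p,q), with value None outside the morphisms p <= q <= m of
   Omega_{1,m}.  (Objects p of Omega_{1,m} are sent to x(p,p).) *)
Record gpath (L : top1graph) := Path {
  pdeg : option nat;
  pfun : nat -> nat -> option (Mor L) }.

HB.instance Definition _ (L : top1graph) := gen_eqMixin (gpath L).
HB.instance Definition _ (L : top1graph) := gen_choiceMixin (gpath L).

Definition le_deg (m : option nat) (p : nat) : bool :=
  if m is Some k then (p <= k)%N else true.

(* x is a degree-preserving functor Omega_{1,m} -> Lambda *)
Definition is_path (L : top1graph) (x : gpath L) : Prop :=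
  [/\ (forall p q, pfun x p q <> None <-> ((p <= q)%N /\ le_deg (pdeg x) q)),
      (forall p q l, pfun x p q = Some l -> deg l = (q - p)%N),
      (forall p, le_deg (pdeg x) p -> exists v, pfun x p p = Some (idm v)) &
      (forall p q t a b, pfun x p q = Some a -> pfun x q t = Some b ->
          sc a = rg b /\ pfun x p t = Some (cmp a b))].

Definition prange (L : top1graph) (x : gpath L) : option (Obj L) :=
  omap (@rg L) (pfun x 0 0).

Definition shift (L : top1graph) (n : nat) (x : gpath L) : gpath L :=
  Path (omap (fun k => (k - n)%N) (pdeg x))
       (fun p q => pfun x (n + p) (n + q)).

Definition add_deg (n : nat) (m : option nat) : option nat :=
  omap (fun k => (n + k)%N) m.

Definition concat_rel (L : top1graph) (l : Mor L) (x z : gpath L) : Prop :=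
  [/\ is_path z, pdeg z = add_deg (deg l) (pdeg x),
      pfun z 0 (deg l) = Some l & shift (deg l) z = x].

(* the path groupoid G_Lambda: (lambda z, d(lambda) - d(mu), mu z) *)
Definition inG (L : top1graph) (x : gpath L) (k : int) (y : gpath L) : Prop :=
  exists (l mu : Mor L) (z : gpath L),
    [/\ is_path z, prange z = Some (sc l), prange z = Some (sc mu),
        concat_rel l z x & concat_rel mu z y /\
        k = (deg l)%:Z - (deg mu)%:Z].

(* Complex-valued functions on G_Lambda, with the convolution product and
   involution of C_c(G_Lambda) (counting-measure Haar system). *)
(* the complex numbers R[i] over a real field R (for R = the reals this is C),
   seen as a numClosedFieldType so that it carries its norm topology *)
Definition CC (R : realType) : numClosedFieldType := R[i].

Section Conv.
Variable R : realType.
Local Notation C := (CC R).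

Definition gfun (L : top1graph) := gpath L -> int -> gpath L -> C.

Definition conv (L : top1graph) (a b : gfun L) : gfun L :=
  fun x k z =>
    \sum_(p \in [set p : gpath L * int | inG x p.2 p.1])
       a x p.2 p.1 * b p.1 (k - p.2) z.

Definition gstar (L : top1graph) (a : gfun L) : gfun L :=
  fun x k y => (a y (- k) x)^*.

Definition Cc0 (L : top1graph) (f : Obj L -> C) : Prop :=
  continuous f /\ exists K : set (Obj L), compact K /\ forall v, f v != 0 -> K v.

Definition Lam1 (L : top1graph) : set (Mor L) := [set e | deg e = 1%N].

(* C_c(Lambda^1), functions given on Mor and only their values on Lambda^1
   matter *)
Definition Cc1 (L : top1graph) (xi : Mor L -> C) : Prop :=
  {within @Lam1 L, continuous xi} /\
  exists K : set (Mor L), [/\ compact K, K `<=` @Lam1 L &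
                              forall e, @Lam1 L e -> xi e != 0 -> K e].

Definition inner (L : top1graph) (xi eta : Mor L -> C) : Obj L -> C :=
  fun v => \sum_(e \in [set e : Mor L | deg e = 1%N /\ sc e = v])
              (xi e)^* * eta e.

Definition phiL (L : top1graph) (f : Obj L -> C) (xi : Mor L -> C) : Mor L -> C :=
  fun e => f (rg e) * xi e.

Definition Psi0 (L : top1graph) (f : Obj L -> C) : gfun L :=
  fun x k y =>
    if (k == 0) && (x == y) then
      (if prange x is Some v then f v else 0)
    else 0.

Definition Psi1 (L : top1graph) (xi : Mor L -> C) : gfun L :=
  fun x k y =>
    if pfun x 0 1 is Some e then
      (if (k == 1) && (shift 1 x == y) then xi e else 0)
    else 0.

End Conv.

From Pilot Require Import Defs.
From HB Require Import structures.
From mathcomp Require Import all_boot all_order all_algebra.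
From mathcomp Require Import all_classical all_reals.
From mathcomp Require Import topology normedtype.
From mathcomp Require Import complex.
Import Order.TTheory GRing.Theory Num.Theory.
Local Open Scope classical_set_scope.
Local Open Scope ring_scope.

(* If Psi_1(xi)^* does not vanish at an arrow (x, n, z) of G_Lambda, then
   n = -1 and z = e x for an edge e with s(e) = r(x); conversely each such edge
   gives an arrow.  So the convolution sum for Psi_1(xi)^* Psi_1(eta) at
   (x, k, y) runs over the edges e with source r(x), and its e-term is
   conj(xi e) eta(e) if k = 0 and x = y, and 0 otherwise.  Psi_0(f) lives on
   the unit space, so left convolution by it multiplies by f(r(x)). *)

Set Implicit Arguments. Unset Strict Implicit.

Section Paths.
Variable L : top1graph.
Implicit Types (x y z : gpath L) (e : Mor L) (v : Obj L).

Lemma gpath_ext x y : pdeg x = pdeg y ->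
  (forall p q, pfun x p q = pfun y p q) -> x = y.
Proof.
case: x => dx fx; case: y => dy fy /= -> xy; congr Path.
by apply/funext => p; apply/funext => q; exact: xy.
Qed.

Lemma path_unit0 x : is_path x -> exists v, pfun x 0 0 = Some (idm v).
Proof. by case=> _ _ + _; apply; case: (pdeg x). Qed.

Lemma path_rg x v q l : is_path x -> pfun x 0 0 = Some (idm v) ->
  pfun x 0 q = Some l -> rg l = v.
Proof.
case=> _ _ _ xcmp x00 x0q; have [+ _] := xcmp _ _ _ _ _ x00 x0q.
by rewrite sc_idm => <-.
Qed.

Lemma prange_unit x v : pfun x 0 0 = Some (idm v) -> prange x = Some v.
Proof. by rewrite /prange => ->; rewrite /= rg_idm. Qed.

Lemma inG_path x k y : inG x k y -> is_path x /\ is_path y.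
Proof. by case=> [l [mu [z [_ _ _ [? _ _ _] [[? _ _ _] _]]]]]. Qed.

Definition pcons e x : gpath L :=
  Path (add_deg 1 (pdeg x)) (fun p q => match p, q with
    | 0, 0 => Some (idm (rg e))
    | 0, q'.+1 => omap (cmp e) (pfun x 0 q')
    | p'.+1, 0 => None
    | p'.+1, q'.+1 => pfun x p' q' end)%N.

Lemma le_deg_add1 m q : le_deg (add_deg 1 m) q.+1 = le_deg m q.
Proof. by case: m => //= k; rewrite add1n ltnS. Qed.

Lemma pcons_path e x : is_path x -> pfun x 0 0 = Some (idm (sc e)) ->
  deg e = 1%N -> is_path (pcons e x).
Proof.
move=> xP; have [xdom xdeg xunit xcmp] := xP; move=> x00 e1.
have rg_x0 q l : pfun x 0 q = Some l -> rg l = sc e by apply: path_rg.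
split.
- move=> [|p] [|q] /=.
  + by split=> // _; case: (pdeg x).
  + rewrite le_deg_add1; have [dom_to dom_of] := xdom 0%N q.
    case: (pfun x 0 q) dom_to dom_of => /= [a|] dom_to dom_of.
      by split=> // _; have [_ ?] := dom_to ltac:(done).
    by split=> [/(_ erefl)|[_ h]] //; apply: dom_of.
  + by split=> [/(_ erefl)|[]].
  + by rewrite le_deg_add1 ltnS; apply: xdom.
- move=> [|p] [|q] l /=.
  + by case=> <-; rewrite deg_idm.
  + case x0q: (pfun x 0 q) => [a|] //= [<-].
    by rewrite deg_cmp ?e1 ?(xdeg _ _ _ x0q) ?subn0 ?add1n ?(rg_x0 _ _ x0q).
  + by [].
  + by move=> /xdeg ->; rewrite subSS.
- move=> [|p] /=; first by move=> _; exists (rg e).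
  by rewrite le_deg_add1; apply: xunit.
- move=> [|p] [|q] [|t] a b //=.
  + case=> <- [<-]; rewrite sc_idm rg_idm; split=> //.
    by have := cmp_idl (idm (rg e)); rewrite rg_idm => ->.
  + case=> <-; case x0t: (pfun x 0 t) => [c|] //= [<-].
    have rg_ec : rg (cmp e c) = rg e by rewrite rg_cmp ?(rg_x0 _ _ x0t).
    rewrite sc_idm rg_ec; split=> //.
    by have := cmp_idl (cmp e c); rewrite rg_ec => ->.
  + case x0q: (pfun x 0 q) => [c|] //= [<-] xqt.
    have [sc_rg -> /=] := xcmp _ _ _ _ _ x0q xqt.
    have ec : sc e = rg c by rewrite (rg_x0 _ _ x0q).
    by rewrite sc_cmp // cmpA.
  + exact: xcmp.
Qed.

Lemma shift1_pcons e x : Defs.shift 1 (pcons e x) = x.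
Proof.
apply: gpath_ext => /=; last by move=> p q; rewrite !add0n.
by case: (pdeg x) => //= k; rewrite add1n subn1.
Qed.

Lemma pcons01 e x : pfun x 0 0 = Some (idm (sc e)) ->
  pfun (pcons e x) 0 1%N = Some e.
Proof. by move=> /= ->; rewrite /= cmp_idr. Qed.

Lemma pcons_shift1 y e : is_path y -> pfun y 0 1%N = Some e ->
  [/\ y = pcons e (Defs.shift 1 y), deg e = 1%N &
      pfun (Defs.shift 1 y) 0 0 = Some (idm (sc e))].
Proof.
move=> yP; have [ydom ydeg yunit ycmp] := yP; move=> y01.
have [u y00] := path_unit0 yP.
have le1 : le_deg (pdeg y) 1.
  by have [+ _] := ydom 0%N 1%N; rewrite y01 => /(_ ltac:(done)) [].
have [w y11] := yunit 1%N le1.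
have [sc_e _] := ycmp _ _ _ _ _ y01 y11.
split; last 2 first.
- by rewrite (ydeg _ _ _ y01).
- by rewrite /= add1n y11 sc_e rg_idm.
apply: gpath_ext => /=.
  by case: (pdeg y) le1 => [k|] //= k1; rewrite add1n subn1 prednK.
move=> [|p] [|q] /=.
- by rewrite y00 (path_rg yP y00 y01).
- rewrite add1n; case y1q: (pfun y 1 q.+1) => [l|] /=.
    by have [_ ->] := ycmp _ _ _ _ _ y01 y1q.
  case y0q: (pfun y 0 q.+1) => [a|] //; exfalso.
  have [+ _] := ydom 0%N q.+1; rewrite y0q => /(_ ltac:(done)) [_ q_le].
  by have [_] := ydom 1%N q.+1; rewrite y1q; apply.
- case yp0: (pfun y p.+1 0) => [a|] //; exfalso.
  by have [+ _] := ydom p.+1 0%N; rewrite yp0 => /(_ ltac:(done)) [].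
- by rewrite !add1n.
Qed.

Lemma concat_pcons e x : is_path x -> pfun x 0 0 = Some (idm (sc e)) ->
  deg e = 1%N -> concat_rel e x (pcons e x).
Proof.
move=> xP x00 e1; split; rewrite ?e1 ?shift1_pcons //.
- exact: pcons_path.
- exact: pcons01.
Qed.

Lemma concat_idm x v : is_path x -> pfun x 0 0 = Some (idm v) ->
  concat_rel (idm v) x x.
Proof.
move=> xP x00; split; rewrite ?deg_idm //; first by case: (pdeg x).
apply: gpath_ext => /=; last by move=> p q; rewrite !add0n.
by case: (pdeg x) => //= k; rewrite subn0.
Qed.

Lemma inG_refl x v : is_path x -> pfun x 0 0 = Some (idm v) -> inG x 0 x.
Proof.
move=> xP x00; have x0 := prange_unit x00; have cx := concat_idm xP x00.
by exists (idm v), (idm v), x; rewrite sc_idm subrr.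
Qed.

Lemma inG_pcons e x : is_path x -> pfun x 0 0 = Some (idm (sc e)) ->
  deg e = 1%N -> inG x (-1) (pcons e x).
Proof.
move=> xP x00 e1; have x0 := prange_unit x00.
have cx := concat_idm xP x00; have cex := concat_pcons xP x00 e1.
by exists (idm (sc e)), e, x; rewrite sc_idm deg_idm e1.
Qed.

End Paths.

Section Convolution.
Variables (R : realType) (L : top1graph).
Implicit Types (x y z : gpath L) (e : Mor L) (v : Obj L) (k m : int).

Lemma Psi0_unit (g : Obj L -> CC R) x v k y : pfun x 0 0 = Some (idm v) ->
  Psi0 g x k y = if (k == 0) && (x == y) then g v else 0.
Proof. by rewrite /Psi0 => /prange_unit ->. Qed.

Lemma Psi1_pcons (xi : Mor L -> CC R) e x m y :
  pfun x 0 0 = Some (idm (sc e)) ->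
  Psi1 xi (pcons e x) m y = if (m == 1) && (x == y) then xi e else 0.
Proof. by move=> x00; rewrite /Psi1 pcons01 // shift1_pcons. Qed.

Lemma Psi1_support (xi : Mor L -> CC R) z m y : is_path z ->
  Psi1 xi z m y != 0 ->
  exists e,
    [/\ deg e = 1%N, pfun y 0 0 = Some (idm (sc e)), z = pcons e y & m = 1].
Proof.
move=> zP; rewrite /Psi1.
case z01: (pfun z 0 1%N) => [e|]; last by rewrite eqxx.
case: ifP => [/andP[/eqP m1 /eqP <-] _|]; last by rewrite eqxx.
by have [z_eq e1 z00] := pcons_shift1 zP z01; exists e.
Qed.

Lemma Psi1_phiL (f : Obj L -> CC R) (xi : Mor L -> CC R) x v k y :
  is_path x -> pfun x 0 0 = Some (idm v) ->
  Psi1 (phiL f xi) x k y = f v * Psi1 xi x k y.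
Proof.
move=> xP x00; rewrite /Psi1 /phiL.
case x01: (pfun x 0 1%N) => [e|]; last by rewrite mulr0.
by rewrite (path_rg xP x00 x01); case: ifP; rewrite ?mulr0.
Qed.

Lemma conv_Psi0l (f : Obj L -> CC R) (a : gfun R L) x v k y :
  is_path x -> pfun x 0 0 = Some (idm v) ->
  conv (Psi0 f) a x k y = f v * a x k y.
Proof.
move=> xP x00; rewrite /conv -(@fsbig_widen _ _ _ _ [set (x, 0)]).
- by rewrite fsbig_set1 /= subr0 (Psi0_unit _ _ _ x00) !eqxx.
- by move=> _ ->; exact: inG_refl xP x00.
- move=> [z n] [_ /= not_x0]; rewrite /preimage /= (Psi0_unit _ _ _ x00).
  case: ifP => [/andP[/eqP n0 /eqP xz]|_]; last by rewrite mul0r.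
  by case: not_x0; rewrite n0 xz.
Qed.

Lemma conv_Psi1_adj (xi eta : Mor L -> CC R) x v k y :
  is_path x -> pfun x 0 0 = Some (idm v) ->
  conv (gstar (Psi1 xi)) (Psi1 eta) x k y =
  if (k == 0) && (x == y) then inner xi eta v else 0.
Proof.
move=> xP x00; set E := [set e : Mor L | deg e = 1%N /\ sc e = v].
have x00E e : E e -> pfun x 0 0 = Some (idm (sc e)) by case=> _ ->.
rewrite /conv -(@fsbig_widen _ _ _ _ ((fun e => (pcons e x, -1)) @` E)).
- rewrite fsbig_image; last first.
    move=> e1 e2 /[!inE] /x00E x001 /x00E x002.
    move=> /(congr1 (fun p => pfun p.1 0 1%N)).
    by rewrite !pcons01 // => -[].
  have k1 : (k - -1 == 1) = (k == 0) by rewrite opprK -subr_eq0 addrK.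
  under eq_fsbigr => e /[!inE] /x00E x00e do
    rewrite /gstar /= opprK !Psi1_pcons // !eqxx /= k1.
  case: ifP => // _; rewrite fsbig1 // => e _; exact: mulr0.
- by move=> _ [e [e1 sc_e] <-]; apply: inG_pcons; rewrite ?sc_e.
- move=> [z n] [/= /inG_path[_ zP] not_img]; rewrite /preimage /=.
  apply: contra_notP not_img => /eqP; rewrite /gstar mulf_eq0 negb_or conjC_eq0.
  case/andP=> /(Psi1_support zP) [e [e1 x00' -> n1]] _.
  have sc_e : sc e = v.
    by move: x00'; rewrite x00 => -[/(congr1 (@sc L))]; rewrite !sc_idm.
  by exists e; rewrite // -n1 opprK.
Qed.

End Convolution.

Unset Implicit Arguments. Set Strict Implicit.

Theorem lemma5p3 (R : realType) (L : top1graph)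
    (f : Obj L -> CC R) (xi eta : Mor L -> CC R) :
  Cc0 f -> Cc1 xi -> Cc1 eta ->
  (forall (x : gpath L) (k : int) (y : gpath L), inG x k y ->
     conv (gstar (Psi1 xi)) (Psi1 eta) x k y = Psi0 (inner xi eta) x k y) /\
  (forall (x : gpath L) (k : int) (y : gpath L), inG x k y ->
     conv (Psi0 f) (Psi1 xi) x k y = Psi1 (phiL f xi) x k y).
Proof.
move=> _ _ _; split=> x k y /inG_path[xP _]; have [v x00] := path_unit0 xP.
- by rewrite (conv_Psi1_adj _ _ _ _ xP x00) (Psi0_unit _ _ _ x00).
- by rewrite (conv_Psi0l _ _ _ _ xP x00) (Psi1_phiL _ _ _ _ xP x00).
Qed.
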